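(* Let $K$ be a positive commutative semiring with its natural (pre)order $\leq$, let $A$ be a finite set, and let $\mathbb{X}$ be a $K$-team with domain $V=\{x_1<\dots<x_k\}$ and values in $A$. Let $\pi$ be a $K$-interpretation over $A$ for the $k$-ary symbol $R$ with $\pi(R(\vec a_s))=\mathbb{X}(s)$ for every $s\in\mathrm{As}(V,A)$. Let $\phi$ be a sentence over $\{R\}$. (i) If $\phi\in\mathrm{FO}(=,\neq\!\bot,\leq)$ and $[\![\phi]\!]_\pi\neq 0$ (i.e. $\mathbb{X}$ satisfies the atom defined by $\phi$), then $[\![\phi]\!]_{\chi_K\circ\pi}\neq0$, i.e. the possibilistic collapse $\chi_K\circ\mathbb{X}$ satisfies that atom. (ii) If $\phi\in\mathrm{FO}(\bot?,\neq,\not\leq)$ and $[\![\phi]\!]_{\chi_K\circ\pi}\neq0$, then $[\![\phi]\!]_\pi\neq0$.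
   Context: Commutative semiring $(K,+,\cdot,0,1)$. It is positive if $a+b=0$ implies $a=b=0$, and $ab=0$ implies $a=0$ or $b=0$. The natural order is $a\leq b$ iff $\exists c:\,a+c=b$. $\mathbb{B}$ is the Boolean semiring $(\{0,1\},\vee,\wedge,0,1)$, ordered by $0<1$. $\chi_K\colon K\to\mathbb{B}$ maps $0\mapsto0$ and nonzero elements to $1$. $K$-teams: $\mathrm{As}(V,A)$ is the set of assignments $s\colon V\to A$. A $K$-team is a function $\mathbb{X}\colon\mathrm{As}(V,A)\to K$. For a fixed total order $x_1<\dots<x_k$ of $V$, $\vec a_s=(s(x_1),\dots,s(x_k))$. The possibilistic collapse of $\mathbb{X}$ is the $\mathbb{B}$-team $\chi_K\circ\mathbb{X}$. An atom $\alpha$ is interpreted on $\mathbb{X}$ as $[\![\alpha]\!]_{\mathbb{X}}:=[\![\phi_\alpha]\!]_{\pi_{\mathbb{X}}}$ for a defining sentence $\phi_\alpha$ over $\{R\}$, where $\pi_{\mathbb{X}}$ maps $R(\vec a_s)$ to $\mathbb{X}(s)$. $\mathbb{X}$ satisfies $\alpha$ if this value is nonzero. The atom is $\mathcal L$-definable if $\phi_\alpha\in\mathcal L$. A $K$-interpretation maps facts and negated facts over $A$ to $K$. It is extended to formulae under assignments as follows: - literals get their $\pi$-values; - $x=y$ and $x\neq y$ get $1$ or $0$ according to their truth; - $\wedge$ is product and $\vee$ is sum; - $\forall$ is the product and $\exists$ the sum over $A$; - $\neg$ is evaluated via negation normal form. A formula (in)equality $\phi*\psi$ has value $1$ if $[\![\phi]\!]*[\![\psi]\!]$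 holds in the semiring, and $0$ otherwise. $\bot$ is a formula of constant value $0$. $\mathrm{FO}(=,\neq\!\bot,\leq)$ (resp. $\mathrm{FO}(\bot?,\neq,\not\leq)$) consists of the formulae built from first-order literals and formula (in)equalities of the forms $\phi=\psi$, $\phi\neq\bot$, $\phi\leq\psi$ (resp. $\phi=\bot$, $\phi\neq\psi$, $\phi\not\leq\psi$) between first-order formulae $\phi,\psi$, using $\wedge,\vee,\forall,\exists$ (positive occurrence, no nesting). *)

From HB Require Import structures.
From mathcomp Require Import all_boot all_order all_algebra.
From Stdlib Require Import ClassicalEpsilon.

Set Implicit Arguments.
Unset Strict Implicit.
Unset Printing Implicit Defensive.

Import GRing.Theory.
Local Open Scope ring_scope.

(* Positive commutative semiring (K is a comNzSemiRingType, so 0 <> 1). *)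
Definition positive_semiring (K : comNzSemiRingType) : Prop :=
  (forall a b : K, a + b = 0 -> a = 0 /\ b = 0) /\
  (forall a b : K, a * b = 0 -> a = 0 \/ b = 0).

Definition nat_le (K : comNzSemiRingType) (a b : K) : Prop :=
  exists c : K, a + c = b.

(* The Boolean semiring B = ({0,1}, \/, /\, 0, 1), as an alias of bool
   (bool itself carries the field F_2 structure in MathComp). *)
Definition boolB : Type := bool.
HB.instance Definition _ := Finite.on boolB.
HB.instance Definition _ := GRing.isNmodule.Build boolB orbA orbC orFb.
Lemma boolB_oner_neq0 : (true : boolB) != false. Proof. by []. Qed.
HB.instance Definition _ := GRing.Nmodule_isComNzSemiRing.Build boolB
  andbA andbC andTb andb_orl andFb boolB_oner_neq0.

Definition chi (K : comNzSemiRingType) (a : K) : boolB := a != 0.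

Definition truthval (K : comNzSemiRingType) (P : Prop) : K :=
  if excluded_middle_informative P then 1 else 0.

(* Variables are natural numbers. First-order formulae are taken in   *)
(* negation normal form (negation is evaluated via NNF anyway).       *)

Inductive fo (k : nat) : Type :=
  | FRel   of k.-tuple nat
  | FNRel  of k.-tuple nat
  | FEq    of nat & nat
  | FNeq   of nat & nat
  | FAnd   of fo k & fo k
  | FOr    of fo k & fo k
  | FAll   of nat & fo k
  | FEx    of nat & fo k.

Inductive cmp_kind : Type :=
  | CEq
  | CNeqBot    (* phi <> bot, psi ignored *)
  | CLe
  | CEqBot     (* phi = bot, psi ignored *)
  | CNeq
  | CNotLe.

Inductive xfo (k : nat) : Type :=
  | XLit  of fo k                        (* first-order literal (checked below) *)
  | XCmp  of cmp_kind & fo k & fo k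
  | XAnd  of xfo k & xfo k
  | XOr   of xfo k & xfo k
  | XAll  of nat & xfo k
  | XEx   of nat & xfo k.

Definition is_literal k (f : fo k) : bool :=
  match f with FRel _ | FNRel _ | FEq _ _ | FNeq _ _ => true | _ => false end.

Fixpoint in_fragment k (ok : cmp_kind -> bool) (phi : xfo k) : bool :=
  match phi with
  | XLit f => is_literal f
  | XCmp c _ _ => ok c
  | XAnd p q | XOr p q => in_fragment ok p && in_fragment ok q
  | XAll _ p | XEx _ p => in_fragment ok p
  end.

Definition frag1 (c : cmp_kind) : bool :=
  match c with CEq | CNeqBot | CLe => true | _ => false end.
Definition frag2 (c : cmp_kind) : bool :=
  match c with CEqBot | CNeq | CNotLe => true | _ => false end.

Fixpoint fo_fv k (f : fo k) : seq nat :=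
  match f with
  | FRel y | FNRel y => val y
  | FEq x y | FNeq x y => [:: x; y]
  | FAnd p q | FOr p q => fo_fv p ++ fo_fv q
  | FAll x p | FEx x p => filter (predC1 x) (fo_fv p)
  end.

Fixpoint xfo_fv k (phi : xfo k) : seq nat :=
  match phi with
  | XLit f => fo_fv f
  | XCmp _ f g => fo_fv f ++ fo_fv g
  | XAnd p q | XOr p q => xfo_fv p ++ xfo_fv q
  | XAll x p | XEx x p => filter (predC1 x) (xfo_fv p)
  end.

Definition sentence k (phi : xfo k) : Prop := xfo_fv phi = [::].

(* A K-interpretation over A for the k-ary symbol R: values of the
   facts R(a) and of the negated facts not R(a), a in A^k. *)
Record interp (K : comNzSemiRingType) (A : finType) (k : nat) := Interp {
  ipos : k.-tuple A -> K;
  ineg : k.-tuple A -> K }.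

Definition collapse_interp (K : comNzSemiRingType) (A : finType) k
  (pi : interp K A k) : interp boolB A k :=
  Interp (fun a => chi (ipos pi a)) (fun a => chi (ineg pi a)).

Definition env (A : finType) := nat -> option A.

Definition upd (A : finType) (g : env A) (x : nat) (a : A) : env A :=
  fun y => if y == x then Some a else g y.

Definition fact_of (A : finType) k (g : env A) (y : k.-tuple nat)
  : option (k.-tuple A) := insub (pmap g (val y)).

Definition eqval (K : comNzSemiRingType) (A : finType) (g : env A) (x y : nat)
  (b : bool) : K :=
  match g x, g y with
  | Some a, Some c => truthval K ((a == c) = b)
  | _, _ => 0
  end.

Fixpoint fo_eval (K : comNzSemiRingType) (A : finType) k (pi : interp K A k)
  (g : env A) (f : fo k) : K :=
  match f with
  | FRel y => if fact_of g y is Some a then ipos pi a else 0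
  | FNRel y => if fact_of g y is Some a then ineg pi a else 0
  | FEq x y => eqval K g x y true
  | FNeq x y => eqval K g x y false
  | FAnd p q => fo_eval pi g p * fo_eval pi g q
  | FOr p q => fo_eval pi g p + fo_eval pi g q
  | FAll x p => \prod_(a : A) fo_eval pi (upd g x a) p
  | FEx x p => \sum_(a : A) fo_eval pi (upd g x a) p
  end.

Definition cmp_holds (K : comNzSemiRingType) (c : cmp_kind) (u v : K) : Prop :=
  match c with
  | CEq => u = v
  | CNeqBot => u <> 0
  | CLe => nat_le u v
  | CEqBot => u = 0
  | CNeq => u <> v
  | CNotLe => ~ nat_le u v
  end.

Fixpoint xfo_eval (K : comNzSemiRingType) (A : finType) k (pi : interp K A k)
  (g : env A) (phi : xfo k) : K :=
  match phi with
  | XLit f => fo_eval pi g f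
  | XCmp c f h => truthval K (cmp_holds c (fo_eval pi g f) (fo_eval pi g h))
  | XAnd p q => xfo_eval pi g p * xfo_eval pi g q
  | XOr p q => xfo_eval pi g p + xfo_eval pi g q
  | XAll x p => \prod_(a : A) xfo_eval pi (upd g x a) p
  | XEx x p => \sum_(a : A) xfo_eval pi (upd g x a) p
  end.

Definition sem (K : comNzSemiRingType) (A : finType) k (pi : interp K A k)
  (phi : xfo k) : K := xfo_eval pi (fun _ => None) phi.

(* V = {x_1 < ... < x_k} is represented by 'I_k with its natural order;
   As(V,A) = {ffun 'I_k -> A}; a K-team is a map As(V,A) -> K. *)
Definition team (K : comNzSemiRingType) (A : finType) (k : nat) :=
  {ffun 'I_k -> A} -> K.

Definition avec (A : finType) k (s : {ffun 'I_k -> A}) : k.-tuple A :=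
  [tuple s i | i < k].

(* Positivity makes chi : K -> B a semiring morphism, so the collapse of the
   value of a first-order formula is its value under chi o pi.  The Boolean
   semiring operations are monotone, so it suffices that each formula
   (in)equality of the fragment is transported in the right direction: =,
   <> bot and <= are preserved by applying chi to both sides (chi u = 0 iff
   u = 0, and u + c = v gives chi u + chi c = chi v), and their negations
   bot?, <> and not<= are therefore reflected. *)

From mathcomp Require Import all_boot all_order all_algebra.
From Stdlib Require Import ClassicalEpsilon.

Set Implicit Arguments.
Unset Strict Implicit.
Unset Printing Implicit Defensive.

Import GRing.Theory.
Local Open Scope ring_scope.

Lemma truthvalP (P : Prop) : reflect P (truthval boolB P).
Proof.
by rewrite /truthval; case: excluded_middle_informative => HP; constructor.
Qed.

Lemma truthval_implyB (P Q : Prop) :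
  (P -> Q) -> truthval boolB P ==> truthval boolB Q.
Proof. by move=> PQ; apply/implyP => /truthvalP /PQ /truthvalP. Qed.

Lemma boolB_neq0 (b : boolB) : b <> 0 <-> b.
Proof. by case: b. Qed.

Section ChiMorphism.
Variable K : comNzSemiRingType.
Hypothesis K_pos : positive_semiring K.

Lemma chi_neq0 (u : K) : u <> 0 <-> chi u.
Proof. by split => [/eqP|/eqP]. Qed.

Lemma chi0 : chi (0 : K) = 0.
Proof. by rewrite /chi eqxx. Qed.

Lemma chi1 : chi (1 : K) = 1.
Proof. by rewrite /chi oner_neq0. Qed.

Lemma chiD (a b : K) : chi (a + b) = chi a + chi b.
Proof.
rewrite /chi; have [/(proj1 K_pos) [-> ->]|ab0] := eqVneq (a + b) 0.
  by rewrite eqxx.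
have [a0|//] := eqVneq a 0; have [b0|//] := eqVneq b 0.
by move: ab0; rewrite a0 b0 addr0 eqxx.
Qed.

Lemma chiM (a b : K) : chi (a * b) = chi a * chi b.
Proof.
rewrite /chi; have [/(proj2 K_pos) [->|->]|ab0] := eqVneq (a * b) 0.
- by rewrite eqxx.
- by rewrite eqxx; case: (a != 0).
have [a0|_] := eqVneq a 0; first by move: ab0; rewrite a0 mul0r eqxx.
have [b0|//] := eqVneq b 0; by move: ab0; rewrite b0 mulr0 eqxx.
Qed.

Lemma chi_sum (I : finType) (F : I -> K) : chi (\sum_i F i) = \sum_i chi (F i).
Proof. exact: (big_morph _ chiD chi0). Qed.

Lemma chi_prod (I : finType) (F : I -> K) :
  chi (\prod_i F i) = \prod_i chi (F i).
Proof. exact: (big_morph _ chiM chi1). Qed.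

Lemma chi_truthval (P : Prop) : chi (truthval K P) = truthval boolB P.
Proof.
by rewrite /truthval; case: excluded_middle_informative => _P;
  [exact: chi1|exact: chi0].
Qed.

Lemma nat_le_chi (u v : K) : nat_le u v -> nat_le (chi u) (chi v).
Proof. by case=> c <-; exists (chi c); rewrite chiD. Qed.

Lemma cmp_holds_chi (c : cmp_kind) (u v : K) :
  frag1 c -> cmp_holds c u v -> cmp_holds c (chi u) (chi v).
Proof.
case: c => //= _; [by move->|by move/chi_neq0/boolB_neq0|exact: nat_le_chi].
Qed.

Lemma cmp_holds_chi_reflect (c : cmp_kind) (u v : K) :
  frag2 c -> cmp_holds c (chi u) (chi v) -> cmp_holds c u v.
Proof.
case: c => //= _.
- by move=> chiu0; apply/eqP; exact: negbFE chiu0.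
- by move=> neq_chi uv; apply: neq_chi; rewrite uv.
- by move=> nle_chi /nat_le_chi.
Qed.

Variables (A : finType) (k : nat) (pi : interp K A k).

Lemma chi_fo_eval (g : env A) (f : fo k) :
  chi (fo_eval pi g f) = fo_eval (collapse_interp pi) g f.
Proof.
elim: f g => [y|y|x y|x y|p IHp q IHq|p IHp q IHq|x p IHp|x p IHp] g /=.
- by case: fact_of => [a|]; rewrite ?chi0.
- by case: fact_of => [a|]; rewrite ?chi0.
- by rewrite /eqval; case: (g x) => [a|]; case: (g y) => [c|];
    rewrite ?chi0 ?chi_truthval.
- by rewrite /eqval; case: (g x) => [a|]; case: (g y) => [c|];
    rewrite ?chi0 ?chi_truthval.
- by rewrite chiM IHp IHq.
- by rewrite chiD IHp IHq.
- by rewrite chi_prod; apply: eq_bigr => a _; rewrite IHp.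
- by rewrite chi_sum; apply: eq_bigr => a _; rewrite IHp.
Qed.

(* [R] is instantiated with implication in both directions. *)
Variable R : rel bool.
Hypothesis R_orb : forall a b c d, R a b -> R c d -> R (a || c) (b || d).
Hypothesis R_andb : forall a b c d, R a b -> R c d -> R (a && c) (b && d).
Hypothesis R_refl : reflexive R.

Lemma xfo_eval_collapse (ok : pred cmp_kind) (g : env A) (phi : xfo k) :
  (forall c (u v : K), ok c ->
     R (truthval boolB (cmp_holds c u v))
       (truthval boolB (cmp_holds c (chi u) (chi v)))) ->
  in_fragment ok phi ->
  R (chi (xfo_eval pi g phi)) (xfo_eval (collapse_interp pi) g phi).
Proof.
move=> R_cmp.
elim: phi g => [f|c f h|p IHp q IHq|p IHp q IHq|x p IHp|x p IHp] g /=.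
- by rewrite chi_fo_eval.
- by rewrite chi_truthval -!chi_fo_eval; apply: R_cmp.
- by case/andP=> okp okq; rewrite chiM; apply: R_andb; [exact: IHp|exact: IHq].
- by case/andP=> okp okq; rewrite chiD; apply: R_orb; [exact: IHp|exact: IHq].
- move=> okp; rewrite chi_prod; apply: (big_ind2 R) => [||a _];
    [exact: R_refl|exact: R_andb|exact: IHp].
- move=> okp; rewrite chi_sum; apply: (big_ind2 R) => [||a _];
    [exact: R_refl|exact: R_orb|exact: IHp].
Qed.

End ChiMorphism.

Theorem mainTheorem5 (K : comNzSemiRingType) (A : finType) (k : nat)
  (X : team K A k) (pi : interp K A k) (phi : xfo k) :
  positive_semiring K ->
  (forall s : {ffun 'I_k -> A}, ipos pi (avec s) = X s) ->
  sentence phi ->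
  (in_fragment frag1 phi ->
     sem pi phi <> 0%R -> sem (collapse_interp pi) phi <> 0%R) /\
  (in_fragment frag2 phi ->
     sem (collapse_interp pi) phi <> 0%R -> sem pi phi <> 0%R).
Proof.
move=> K_pos _ _; rewrite /sem; set g0 : env A := fun _ => None.
split=> ok_phi.
- have imply_collapse :
      chi (xfo_eval pi g0 phi) ==> xfo_eval (collapse_interp pi) g0 phi.
    apply: (xfo_eval_collapse K_pos pi (R := implb)) ok_phi
      => [||[]//|c u v ok_c].
    + by do 4!case.
    + by do 4!case.
    + exact/truthval_implyB/cmp_holds_chi.
  by move/chi_neq0=> nz; apply/boolB_neq0; exact: implyP imply_collapse nz.
- have collapse_imply :
      xfo_eval (collapse_interp pi) g0 phi ==> chi (xfo_eval pi g0 phi).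
    apply: (xfo_eval_collapse K_pos pi (R := fun a b => b ==> a)) ok_phi
      => [||[]//|c u v ok_c].
    + by do 4!case.
    + by do 4!case.
    + exact/truthval_implyB/cmp_holds_chi_reflect.
  by move/boolB_neq0=> nz; apply/chi_neq0; exact: implyP collapse_imply nz.
Qed.
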